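(* Let $R$ be a Dedekind ring with quotient field $K$, let $a\in R$ be square-free such that $f(x)=x^n-a$ is irreducible over $R$, and let $\alpha$ be a root of $f(x)$. If every prime ideal of $R$ that contains $n\cdot 1_K$ also contains $a$, then $R[\alpha]$ is integrally closed (in $K(\alpha)$).
   Context: An element $a$ of a Dedekind ring $R$ is square-free if the principal ideal $aR$ is not divisible by the square of any prime ideal of $R$. *)

From HB Require Import structures.
From mathcomp Require Import all_boot all_order all_algebra all_field.
Set Implicit Arguments. Unset Strict Implicit. Unset Printing Implicit Defensive.
Import GRing.Theory.
Local Open Scope ring_scope.

Section Ideals.
Variable R : idomainType.

Definition is_ideal (I : R -> Prop) : Prop :=
  [/\ I 0, (forall x y, I x -> I y -> I (x + y)) &
      (forall r x, I x -> I (r * x))].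

Definition is_prime_ideal (P : R -> Prop) : Prop :=
  [/\ is_ideal P, ~ P 1 & (forall x y, P (x * y) -> P x \/ P y)].

Definition principal_ideal (a : R) : R -> Prop := fun z => exists r, z = a * r.

Definition ideal_mul (I J : R -> Prop) : R -> Prop :=
  fun z => exists s : seq (R * R),
    (forall u, u \in s -> I u.1 /\ J u.2) /\ z = \sum_(u <- s) u.1 * u.2.

Definition ideal_dvd (I A : R -> Prop) : Prop :=
  exists J, is_ideal J /\ forall z, A z <-> ideal_mul I J z.

Definition square_free (a : R) : Prop :=
  forall P, is_prime_ideal P -> ~ ideal_dvd (ideal_mul P P) (principal_ideal a).

Definition noetherian : Prop :=
  forall I : nat -> R -> Prop, (forall k, is_ideal (I k)) ->
    (forall k x, I k x -> I k.+1 x) ->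
    exists N, forall k x, (N <= k)%N -> I k x -> I N x.

Definition integrally_closed_domain : Prop :=
  forall x : {fraction R},
    (exists p : {poly R}, p \is monic /\ root (map_poly (@tofrac R) p) x) ->
    exists r : R, x = tofrac r.

Definition nonzero_primes_maximal : Prop :=
  forall P, is_prime_ideal P -> (exists x, P x /\ x != 0) ->
    forall J, is_ideal J -> (forall x, P x -> J x) ->
      J 1 \/ (forall x, J x -> P x).

Definition dedekind : Prop :=
  [/\ noetherian, integrally_closed_domain & nonzero_primes_maximal].

Definition irreducible_over (f : {poly R}) : Prop :=
  [/\ f != 0, f \isn't a GRing.unit &
      forall g h : {poly R}, f = g * h -> g \is a GRing.unit \/ h \is a GRing.unit].
End Ideals.

Definition frac_emb (R : idomainType) (L : fieldExtType {fraction R}) (r : R) : L :=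
  (tofrac r)%:A.

Definition adjoin_ring (R : idomainType) (L : fieldExtType {fraction R})
  (alpha : L) : L -> Prop :=
  fun x => exists p : {poly R}, x = (map_poly (@frac_emb R L) p).[alpha].

Definition integral_over (L : fieldType) (S : L -> Prop) (x : L) : Prop :=
  exists p : {poly L}, [/\ p \is monic, (forall i, S p`_i) & root p x].

(* Suppose some z in K(alpha), integral over R, is missing from R[alpha]; by noetherianity
   choose one whose conductor P = {r | r z in R[alpha]} is maximal.  Maximality makes P prime,
   and Euler's lemma (f'(alpha) z in R[alpha], i.e. n a z in R[alpha]) puts n a, hence a, in P.
   Some coordinate of z in the basis 1, alpha, ..., alpha^(n-1) lies in P^-1 but not in R, so
   P is invertible, and as a is square-free there is t outside P with t P in aR.  Writing
   a z = sum_j b_j alpha^j, an Eisenstein-type induction shows that every b_j lies in P: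
   t b_j / alpha is integral, so a power of t b_j lies in alpha^n R[alpha] /\ R = aR.  Hence
   t z is in R[alpha], i.e. t lies in P: a contradiction. *)

From HB Require Import structures.
From mathcomp Require Import all_boot all_order all_algebra all_field.
From mathcomp Require Import ring zify.
From Stdlib Require Import Classical ClassicalEpsilon.
Set Implicit Arguments. Unset Strict Implicit. Unset Printing Implicit Defensive.
Import GRing.Theory Pdiv.Ring Pdiv.RingMonic.
Local Open Scope ring_scope.
Local Notation "x %:F" := (@tofrac _ x).

Lemma monic_size_le1 (A : nzRingType) (q : {poly A}) :
  q \is monic -> (size q <= 1)%N -> q = 1.
Proof.
by move=> /monicP + /size1_polyC q_eq; rewrite q_eq lead_coefC => ->.
Qed.

Section QuotientByMonic.
Variables (A : comNzRingType) (g : {poly A}).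

Lemma in_qpolyC c : in_qpoly g c%:P = qpolyC g c.
Proof.
apply: val_inj; rewrite /= rmodp_small //.
exact: leq_ltn_trans (size_polyC_leq1 c) (size_mk_monic_gt1 g).
Qed.

Lemma horner_in_qpolyX p : (map_poly (qpolyC g) p).[in_qpoly g 'X] = in_qpoly g p.
Proof.
elim/poly_ind: p => [|p c IH]; first by rewrite !rmorph0 horner0.
by rewrite !rmorphD !rmorphM /= map_polyX map_polyC hornerMXaddC IH in_qpolyC.
Qed.

Lemma root_in_qpolyX : g \is monic -> (1 < size g)%N ->
  root (map_poly (qpolyC g) g) (in_qpoly g 'X).
Proof.
move=> monic_g size_g; apply/eqP; rewrite horner_in_qpolyX; apply: val_inj => /=.
by rewrite /mk_monic size_g monic_g rmodpp.
Qed.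

Lemma qpolyC_inj : injective (qpolyC g).
Proof. by move=> b c /(congr1 val) /= /polyC_inj. Qed.

End QuotientByMonic.

Lemma monic_splitting_ring (A : comNzRingType) (g : {poly A}) : g \is monic ->
  exists (B : comNzRingType) (j : {rmorphism A -> B}), injective j /\
    exists rs : seq B, map_poly j g = \prod_(r <- rs) ('X - r%:P).
Proof.
have [n] := ubnP (size g); elim: n A g => // n IH A g size_g monic_g.
have [size_g_le1 | size_g_gt1] := leqP (size g) 1.
  exists A, idfun; split => //; exists [::].
  by rewrite big_nil map_poly_id // (monic_size_le1 monic_g).
have /factor_theorem[q g_eq] := root_in_qpolyX monic_g size_g_gt1.
have monic_q : q \is monic.
  by rewrite -(monicMr q (monicXsubC (in_qpoly g 'X))) -g_eq monic_map.
have size_q : (size q < n)%N.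
  move: size_g; rewrite -(size_map_inj_poly (@qpolyC_inj _ g) (rmorph0 _) g) g_eq.
  by rewrite size_Mmonic ?monic_neq0 ?monicXsubC // size_XsubC addn2.
have [B [j [inj_j [rs q_eq]]]] := IH _ q size_q monic_q.
exists B, (j \o qpolyC g); split; first exact: inj_comp inj_j (@qpolyC_inj _ g).
exists (j (in_qpoly g 'X) :: rs).
by rewrite big_cons map_poly_comp g_eq rmorphM /= q_eq map_polyXsubC mulrC.
Qed.

Section IntegralCoefs.
Variables (R B : comNzRingType) (phi : {rmorphism R -> B}).

Lemma integral_sum (I : Type) (r : seq I) (F : I -> B) :
  (forall i, integralOver phi (F i)) -> integralOver phi (\sum_(i <- r) F i).
Proof. by move=> intF; apply: big_ind => //; [apply: integral0 | apply: integral_add]. Qed.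

Lemma integral_expr x k : integralOver phi x -> integralOver phi (x ^+ k).
Proof.
move=> int_x; elim: k => [|k IH]; first by rewrite expr0; apply: integral1.
by rewrite exprS; apply: integral_mul.
Qed.

Lemma integral_coefM (p q : {poly B}) :
    (forall i, integralOver phi p`_i) -> (forall i, integralOver phi q`_i) ->
  forall i, integralOver phi (p * q)`_i.
Proof.
by move=> int_p int_q i; rewrite coefM; apply: integral_sum => k; apply: integral_mul.
Qed.

Lemma integral_coef_XsubC r i :
  integralOver phi r -> integralOver phi ('X - r%:P)`_i.
Proof.
move=> int_r; rewrite coefB coefX coefC; apply: integral_sub; first exact: integral_nat.
by case: (i == 0)%N => //; apply: integral0.
Qed.

Lemma integral_coef_prod_XsubC (rs : seq B) i :
  {in rs, forall r, integralOver phi r} ->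
  integralOver phi (\prod_(r <- rs) ('X - r%:P))`_i.
Proof.
elim: rs i => [|r rs IH] i int_rs.
  by rewrite big_nil coefC; case: ifP => _; [apply: integral1 | apply: integral0].
rewrite big_cons; apply: integral_coefM => k.
  by apply: integral_coef_XsubC; apply: int_rs; rewrite mem_head.
by apply: IH => x rs_x; apply: int_rs; rewrite inE rs_x orbT.
Qed.

End IntegralCoefs.

Section FractionField.
Variable R : idomainType.
Local Notation K := {fraction R}.

Lemma tofrac_inj : injective (@tofrac R).
Proof. by move=> x y /eqP; rewrite tofrac_eq => /eqP. Qed.

Lemma poly_tofrac_lift (g : {poly K}) : (forall i, exists r, g`_i = r%:F) ->
  exists gR : {poly R}, g = map_poly (@tofrac R) gR.
Proof.
elim/poly_ind: g => [|p c IH] coef_g; first by exists 0; rewrite rmorph0.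
have [|pR ->] := IH.
  by move=> i; have [r] := coef_g i.+1; rewrite -cons_poly_def coef_cons /=; exists r.
have [cR] := coef_g 0%N; rewrite -cons_poly_def coef_cons /= => ->.
by exists (pR * 'X + cR%:P); rewrite rmorphD rmorphM /= map_polyX map_polyC.
Qed.

Hypothesis R_int_closed : integrally_closed_domain R.

Lemma integral_frac_in_ring (B : comNzRingType) (j : {rmorphism K -> B}) (c : K) :
  injective j -> integralOver (j \o @tofrac R) (j c) -> exists r, c = r%:F.
Proof.
move=> inj_j [p monic_p]; rewrite map_poly_comp /root horner_map /= -(rmorph0 j).
by move=> /eqP /inj_j pc0; apply: R_int_closed; exists p; split => //; apply/eqP.
Qed.

Lemma monic_factor_lift (f : {poly R}) (g h : {poly K}) : f \is monic ->
  map_poly (@tofrac R) f = g * h -> g \is monic -> exists gR, g = map_poly (@tofrac R) gR.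
Proof.
move=> monic_f f_eq monic_g.
have [B [j [inj_j [rs g_eq]]]] := monic_splitting_ring monic_g.
apply: poly_tofrac_lift => i; apply: (integral_frac_in_ring inj_j).
rewrite -coef_map g_eq; apply: integral_coef_prod_XsubC => r rs_r; exists f => //.
rewrite map_poly_comp f_eq rmorphM /= /root hornerM g_eq horner_prod.
by rewrite (big_rem r) //= hornerXsubC subrr !mul0r.
Qed.

End FractionField.

Section LagrangeSum.
Variables (B : comNzRingType) (p : {poly B}).

(* [lagrange_sum rs] is the sum over i of p(r_i) * \prod_(k != i) ('X - r_k): the
   remainder of p * f^`() modulo f = \prod_i ('X - r_i). *)
Fixpoint lagrange_sum (rs : seq B) : {poly B} :=
  if rs is r :: rs' then
    p.[r] *: \prod_(x <- rs') ('X - x%:P) + ('X - r%:P) * lagrange_sum rs'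
  else 0.

Lemma lagrange_sumE rs : exists U,
  p * (\prod_(x <- rs) ('X - x%:P))^`() = U * \prod_(x <- rs) ('X - x%:P) + lagrange_sum rs.
Proof.
elim: rs => [|r rs [U IH]] /=.
  by exists 0; rewrite big_nil derivC mulr0 mul0r addr0.
have /factor_theorem[q p_eq] : root (p - p.[r]%:P) r.
  by rewrite /root hornerD hornerN hornerC subrr.
have -> : lagrange_sum rs = p * (\prod_(x <- rs) ('X - x%:P))^`() - U * \prod_(x <- rs) ('X - x%:P).
  by rewrite IH addrC addKr.
exists (q + U); rewrite big_cons derivM derivXsubC -mul_polyC.
have -> : p.[r]%:P = p - q * ('X - r%:P) by rewrite -p_eq opprB addrC subrK.
ring.
Qed.

Lemma size_lagrange_sum rs : (size (lagrange_sum rs) <= size rs)%N.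
Proof.
elim: rs => [|r rs IH] /=; first by rewrite size_poly0.
rewrite (leq_trans (size_polyD _ _)) // geq_max.
rewrite (leq_trans (size_scale_leq _ _)) ?size_prod_XsubC //=.
by rewrite (leq_trans (size_polyMleq _ _)) // size_XsubC.
Qed.

Lemma integral_coef_lagrange_sum (R : comNzRingType) (phi : {rmorphism R -> B}) rs i :
    {in rs, forall r, integralOver phi r /\ integralOver phi p.[r]} ->
  integralOver phi (lagrange_sum rs)`_i.
Proof.
elim: rs i => [|r rs IH] i int_rs /=; first by rewrite coef0; apply: integral0.
have [int_r int_pr] := int_rs r (mem_head _ _).
have {}int_rs : {in rs, forall x, integralOver phi x /\ integralOver phi p.[x]}.
  by move=> x rs_x; apply: int_rs; rewrite inE rs_x orbT.
rewrite coefD coefZ; apply: integral_add.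
  by apply: integral_mul => //; apply: integral_coef_prod_XsubC => x /int_rs[].
by apply: integral_coefM => k; [apply: integral_coef_XsubC | apply: IH].
Qed.

End LagrangeSum.

Section EulerLemma.
Variable R : idomainType.
Local Notation K := {fraction R}.
Hypothesis R_int_closed : integrally_closed_domain R.

Lemma euler_rmodp_lift (f h : {poly R}) (p : {poly K}) :
    f \is monic -> h \is monic ->
    map_poly (@tofrac R) f %| map_poly (@tofrac R) h \Po p ->
  exists w, rmodp (p * (map_poly (@tofrac R) f)^`()) (map_poly (@tofrac R) f)
            = map_poly (@tofrac R) w.
Proof.
set fK := map_poly _ f => monic_f monic_h /dvdpP[d hp_eq].
have monic_fK : fK \is monic by apply: monic_map.
have [B [j [inj_j [rs fK_eq]]]] := monic_splitting_ring monic_fK.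
have size_map_j (q : {poly K}) : size (map_poly j q) = size q.
  exact: size_map_inj_poly inj_j (rmorph0 j) q.
have root_fK r : r \in rs -> (map_poly j fK).[r] = 0.
  by move=> rs_r; rewrite fK_eq horner_prod (big_rem r) //= hornerXsubC subrr mul0r.
have rem_eq : map_poly j (rmodp (p * fK^`()) fK) = lagrange_sum (map_poly j p) rs.
  have [U pf'_eq] := lagrange_sumE (map_poly j p) rs.
  have monic_jfK : map_poly j fK \is monic by apply: monic_map.
  have size_rem : (size (map_poly j (rmodp (p * fK^`()) fK)) < size (map_poly j fK))%N.
    by rewrite !size_map_j ltn_rmodpN0 ?monic_neq0.
  rewrite -(rmodp_addl_mul_small monic_jfK (map_poly j (rdivp (p * fK^`()) fK)) size_rem).
  rewrite -rmorphM -rmorphD -rdivp_eq // rmorphM /= -deriv_map fK_eq pf'_eq.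
  rewrite rmodp_addl_mul_small ?monic_prod_XsubC // size_prod_XsubC ltnS.
  exact: size_lagrange_sum.
apply: poly_tofrac_lift => i; apply: (integral_frac_in_ring R_int_closed inj_j).
rewrite -coef_map rem_eq; apply: integral_coef_lagrange_sum => r rs_r; split.
  by exists f => //; rewrite map_poly_comp /root root_fK.
exists h => //; rewrite map_poly_comp /root -horner_comp -map_comp_poly hp_eq.
by rewrite rmorphM /= hornerM root_fK ?mulr0.
Qed.

End EulerLemma.

Section Ideals.
Variable R : idomainType.
Implicit Types (P I J : R -> Prop) (a r x y : R).

Lemma ideal0 I : is_ideal I -> I 0.
Proof. by case. Qed.

Lemma idealD I x y : is_ideal I -> I x -> I y -> I (x + y).
Proof. by case=> _ + _; apply. Qed.

Lemma idealMl I r x : is_ideal I -> I x -> I (r * x).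
Proof. by case=> _ _; apply. Qed.

Lemma idealMr I r x : is_ideal I -> I x -> I (x * r).
Proof. by rewrite mulrC; apply: idealMl. Qed.

Lemma ideal_sum I (T : eqType) (s : seq T) (F : T -> R) :
  is_ideal I -> {in s, forall i, I (F i)} -> I (\sum_(i <- s) F i).
Proof.
move=> idI IF; rewrite big_seq; apply: big_ind => // [|x y]; [exact: ideal0 | exact: idealD].
Qed.

Lemma principal_ideal_is_ideal a : is_ideal (principal_ideal a).
Proof.
split; first by exists 0; rewrite mulr0.
  by move=> _ _ [x ->] [y ->]; exists (x + y); rewrite mulrDr.
by move=> r _ [x ->]; exists (r * x); rewrite mulrCA.
Qed.

Lemma prime_idealX P x k : is_prime_ideal P -> P (x ^+ k) -> P x.
Proof.
case=> _ P1 Pmul; elim: k => [|k IH]; first by rewrite expr0 => /P1.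
by rewrite exprS => /Pmul[].
Qed.

Lemma ideal_mul0 I J : ideal_mul I J 0.
Proof. by exists [::]; rewrite big_nil. Qed.

Lemma ideal_mulD I J x y : ideal_mul I J x -> ideal_mul I J y -> ideal_mul I J (x + y).
Proof.
move=> [s [Is ->]] [s' [Is' ->]]; exists (s ++ s'); rewrite big_cat; split => // u.
by rewrite mem_cat => /orP[/Is | /Is'].
Qed.

Lemma ideal_mulM I J x y : I x -> J y -> ideal_mul I J (x * y).
Proof.
by move=> Ix Jy; exists [:: (x, y)]; rewrite big_seq1; split => // u; rewrite inE => /eqP ->.
Qed.

Lemma square_free_neq0 a : square_free a -> a != 0.
Proof.
move=> sqf_a; apply/eqP => a0.
have zero_ideal : is_ideal (eq^~ 0).
  by split=> // [_ _ -> -> | r _ ->]; rewrite ?addr0 ?mulr0.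
apply: (sqf_a (eq^~ 0)).
  split=> // [/eqP | x y /eqP]; rewrite ?oner_eq0 // mulf_eq0.
  by case/orP => /eqP; [left | right].
exists (eq^~ 0); split=> // z; rewrite a0; split=> [[r ->] | [s [s0 ->]]].
  by rewrite mul0r; apply: ideal_mul0.
by exists 0; rewrite mul0r big1_seq // => u /s0[_ ->]; rewrite mulr0.
Qed.

Lemma noetherian_maximal (T : Type) (Z : T -> Prop) (C : T -> R -> Prop) :
    noetherian R -> (forall z, Z z -> is_ideal (C z)) -> (exists z, Z z) ->
  exists2 z, Z z & forall z', Z z' -> (forall r, C z r -> C z' r) ->
    forall r, C z' r -> C z r.
Proof.
move=> noeth_R idC [z0 Zz0]; apply: NNPP => no_max.
have grow (z : {z | Z z}) : exists z' : {z | Z z},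
    (forall r, C (sval z) r -> C (sval z') r) /\ exists r, C (sval z') r /\ ~ C (sval z) r.
  case: z => z Zz; apply: NNPP => no_grow; apply: no_max; exists z => // z' Zz' Czz' r Cz'r.
  by apply: NNPP => Czr; apply: no_grow; exists (exist _ z' Zz'); split => //; exists r.
have [next next_spec] := ClassicalEpsilon.choice _ grow.
pose chain k := iter k next (exist _ z0 Zz0).
have [N chain_stable] := noeth_R (fun k => C (sval (chain k)))
  (fun k => idC _ (svalP (chain k))) (fun k => proj1 (next_spec (chain k))).
have [r [Cr notCr]] := proj2 (next_spec (chain N)).
by apply: notCr; apply: (chain_stable N.+1).
Qed.

End Ideals.

Section FractionalIdeals.
Variable R : idomainType.
Local Notation K := {fraction R}.
Implicit Types (P : R -> Prop) (a r : R) (q : K).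

Definition ideal_inv P q := forall p, P p -> exists r, q * p%:F = r%:F.

(* [ideal_inv P] is the fractional ideal P^-1 = {q | q P <= R}, and [mul_inv_ideal P] is the
   ideal P P^-1 of R. *)
Definition mul_inv_ideal P r := exists s : seq (R * K),
  (forall u, u \in s -> P u.1 /\ ideal_inv P u.2) /\ r%:F = \sum_(u <- s) u.1%:F * u.2.

Lemma tofrac_sum_lift (M : R -> Prop) (T : eqType) (s : seq T) (F : T -> K) :
    M 0 -> (forall x y, M x -> M y -> M (x + y)) ->
    {in s, forall i, exists2 y, M y & y%:F = F i} ->
  exists2 y, M y & y%:F = \sum_(i <- s) F i.
Proof.
move=> M0 MD; elim: s => [|i s IH] liftF; first by exists 0; rewrite ?big_nil ?tofrac0.
rewrite big_cons; have [y1 My1 <-] := liftF i (mem_head _ _).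
have [|y2 My2 <-] := IH; first by move=> k s_k; apply: liftF; rewrite inE s_k orbT.
by exists (y1 + y2); [apply: MD | rewrite tofracD].
Qed.

Lemma mul_inv_ideal_is_ideal P : is_ideal P -> is_ideal (mul_inv_ideal P).
Proof.
move=> idP; split; first by exists [::]; rewrite big_nil tofrac0.
  move=> x y [s [s_inv x_eq]] [s' [s'_inv y_eq]]; exists (s ++ s').
  by rewrite big_cat tofracD x_eq y_eq; split => // u; rewrite mem_cat => /orP[/s_inv | /s'_inv].
move=> r x [s [s_inv x_eq]]; exists [seq (r * u.1, u.2) | u <- s]; split.
  move=> _ /mapP[u s_u ->] /=; have [Pu inv_u] := s_inv u s_u.
  by split=> //; apply: idealMl.
rewrite big_map tofracM x_eq mulr_sumr; apply: eq_bigr => u _.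
by rewrite tofracM mulrA.
Qed.

Lemma mul_inv_idealW P x : P x -> mul_inv_ideal P x.
Proof.
move=> Px; exists [:: (x, 1)]; rewrite big_seq1 mulr1; split => // u.
by rewrite inE => /eqP -> /=; split => // p _; exists p; rewrite mul1r.
Qed.

Hypothesis R_int_closed : integrally_closed_domain R.
Hypothesis R_noeth : noetherian R.
Hypothesis R_max : nonzero_primes_maximal R.

(* The chain of ideals (a R[q]_{<k}) /\ R stabilizes, which makes q a root of a monic
   polynomial over R. *)
Lemma stabilizer_in_ring q P a : P a -> a != 0 ->
  (forall p, P p -> exists2 r, q * p%:F = r%:F & P r) -> exists r, q = r%:F.
Proof.
move=> Pa a_neq0 qP.
pose I k r := exists g : {poly R}, (size g <= k)%N /\ r%:F = a%:F * (map_poly (@tofrac R) g).[q].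
have idI k : is_ideal (I k).
  split; first by exists 0; rewrite size_poly0 map_poly0 horner0 mulr0 tofrac0.
    move=> x y [g1 [size_g1 x_eq]] [g2 [size_g2 y_eq]]; exists (g1 + g2).
    rewrite (leq_trans (size_polyD _ _)) ?geq_max ?size_g1 //.
    by rewrite tofracD x_eq y_eq rmorphD hornerD mulrDr.
  move=> r x [g [size_g x_eq]]; exists (r *: g).
  by rewrite (leq_trans (size_scale_leq _ _)) // tofracM x_eq linearZ hornerZ mulrCA.
have I_mono k x : I k x -> I k.+1 x by case=> g [size_g x_eq]; exists g; rewrite leqW.
have [N I_stable] := R_noeth idI I_mono.
have [r [r_eq Pr]] : exists r, r%:F = a%:F * q ^+ N /\ P r.
  elim: N {I_stable} => [|k [r [r_eq Pr]]]; first by exists a; rewrite expr0 mulr1.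
  have [r' r'_eq Pr'] := qP r Pr; exists r'.
  by rewrite -r'_eq r_eq exprS mulrCA.
have [|g [size_g g_eq]] := I_stable N.+1 r (leqnSn N).
  by exists 'X^N; rewrite size_polyXn map_polyXn hornerXn.
have qN : q ^+ N = (map_poly (@tofrac R) g).[q].
  by apply: (mulfI (x := a%:F)); rewrite ?tofrac_eq0 // -r_eq.
apply: R_int_closed; exists ('X^N - g); split.
  by rewrite monicE lead_coefDl ?lead_coefXn // size_polyN size_polyXn ltnS.
by rewrite /root rmorphB /= map_polyXn hornerD hornerN hornerXn qN subrr.
Qed.

Lemma mul_inv_prime_ideal P a q : is_prime_ideal P -> P a -> a != 0 ->
  ideal_inv P q -> ~ (exists r, q = r%:F) -> mul_inv_ideal P 1.
Proof.
move=> primeP Pa a_neq0 inv_q q_notin_R.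
have [idP _ _] := primeP.
have [//|] := R_max primeP (ex_intro _ a (conj Pa a_neq0)) (mul_inv_ideal_is_ideal idP)
  (@mul_inv_idealW P).
move=> PPinv_sub; case: q_notin_R; apply: (stabilizer_in_ring Pa a_neq0) => p Pp.
have [r r_eq] := inv_q p Pp; exists r => //; apply: PPinv_sub.
exists [:: (p, q)]; rewrite big_seq1 -r_eq mulrC; split => // u.
by rewrite inE => /eqP ->.
Qed.

Lemma sq_dvd_principal P a : is_prime_ideal P -> P a -> mul_inv_ideal P 1 ->
    (forall t, (forall p, P p -> principal_ideal a (t * p)) -> P t) ->
  ideal_dvd (ideal_mul P P) (principal_ideal a).
Proof.
move=> [idP _ _] Pa [s [s_inv s_eq]] a_div_sub.
have idA := principal_ideal_is_ideal a.
pose J r := forall p1 p2, P p1 -> P p2 -> principal_ideal a (r * (p1 * p2)).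
have idJ : is_ideal J.
  split=> [p1 p2 _ _ | x y Jx Jy p1 p2 P1 P2 | r x Jx p1 p2 P1 P2].
  - by exists 0; rewrite !mul0r mulr0.
  - by rewrite mulrDl; apply: (idealD idA (Jx _ _ P1 P2) (Jy _ _ P1 P2)).
  - by rewrite -mulrA; apply: idealMl => //; apply: Jx.
exists J; split => // z; split => [[r ->] | [s' [s'_mem ->]]]; last first.
  apply: (ideal_sum idA) => u /s'_mem[[v [v_mem ->]] Ju2].
  rewrite mulr_suml; apply: (ideal_sum idA) => w /v_mem[P1 P2].
  by rewrite mulrC; apply: Ju2.
(* since P P^-1 = R, a r = sum_(u, w) (u.1 w.1) (u.2 w.2 a r) with u.2 w.2 a r in J *)
have lift_uw u w : u \in s -> w \in s -> exists2 y, ideal_mul (ideal_mul P P) J y &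
    y%:F = u.1%:F * w.1%:F * (u.2 * w.2 * (a * r)%:F).
  move=> s_u s_w; have [Pu1 inv_u2] := s_inv u s_u; have [Pw1 inv_w2] := s_inv w s_w.
  have [e e_eq] := inv_w2 a Pa.
  have Pe : P e.
    apply: a_div_sub => p Pp; have [r' r'_eq] := inv_w2 p Pp; exists r'.
    by apply: tofrac_inj; rewrite !tofracM -e_eq -r'_eq; ring.
  have [e' e'_eq] := inv_u2 e Pe.
  exists ((u.1 * w.1) * (e' * r)); last by rewrite !tofracM -e'_eq -e_eq; ring.
  apply: ideal_mulM; first exact: ideal_mulM.
  move=> p1 p2 P1 P2; have [r1 r1_eq] := inv_u2 p1 P1; have [r2 r2_eq] := inv_w2 p2 P2.
  exists (r * (r1 * r2)); apply: tofrac_inj.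
  by rewrite !tofracM -e'_eq -r1_eq -r2_eq -e_eq; ring.
have [y My /tofrac_inj <- //] : exists2 y, ideal_mul (ideal_mul P P) J y & y%:F = (a * r)%:F.
have -> : (a * r)%:F = \sum_(u <- s) \sum_(w <- s) u.1%:F * w.1%:F * (u.2 * w.2 * (a * r)%:F).
  rewrite -[LHS]mul1r -[1 in LHS]mul1r -{1 2}tofrac1 !s_eq !mulr_suml.
  apply: eq_bigr => u _; rewrite !mulr_sumr !mulr_suml; apply: eq_bigr => w _; ring.
apply: tofrac_sum_lift => [|x y|u s_u]; [exact: ideal_mul0 | exact: ideal_mulD |].
apply: tofrac_sum_lift => [|x y|w s_w]; [exact: ideal_mul0 | exact: ideal_mulD |].
exact: lift_uw.
Qed.

Lemma exists_uniformizer P a : square_free a -> is_prime_ideal P -> P a ->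
  mul_inv_ideal P 1 -> exists t, ~ P t /\ forall p, P p -> principal_ideal a (t * p).
Proof.
move=> sqf_a primeP Pa PPinv1; apply: NNPP => no_t.
apply: (sqf_a P primeP); apply: sq_dvd_principal => // t t_div.
by apply: NNPP => notPt; apply: no_t; exists t.
Qed.

End FractionalIdeals.

HB.instance Definition _ (R : idomainType) (L : fieldExtType {fraction R}) :=
  GRing.RMorphism.copy (@frac_emb R L) (in_alg L \o @tofrac R).

Section AdjoinRing.
Variables (R : idomainType) (L : fieldExtType {fraction R}) (th : L).
Local Notation emb := (@frac_emb R L).
Local Notation Rth := (adjoin_ring th).

Lemma frac_emb_eq0 r : (emb r == 0) = (r == 0).
Proof. by rewrite /frac_emb scaler_eq0 oner_eq0 orbF tofrac_eq0. Qed.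

Lemma adjoin_ring0 : Rth 0.
Proof. by exists 0; rewrite rmorph0 horner0. Qed.

Lemma adjoin_ringD x y : Rth x -> Rth y -> Rth (x + y).
Proof. by move=> [p ->] [q ->]; exists (p + q); rewrite rmorphD hornerD. Qed.

Lemma adjoin_ringN x : Rth x -> Rth (- x).
Proof. by move=> [p ->]; exists (- p); rewrite rmorphN hornerN. Qed.

Lemma adjoin_ringM x y : Rth x -> Rth y -> Rth (x * y).
Proof. by move=> [p ->] [q ->]; exists (p * q); rewrite rmorphM hornerM. Qed.

Lemma adjoin_ring_emb r : Rth (emb r).
Proof. by exists r%:P; rewrite map_polyC hornerC. Qed.

Lemma adjoin_ring_gen : Rth th.
Proof. by exists 'X; rewrite map_polyX hornerX. Qed.

Lemma adjoin_ringX x k : Rth x -> Rth (x ^+ k).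
Proof.
move=> Rx; elim: k => [|k IH]; first by rewrite expr0 -(rmorph1 emb); apply: adjoin_ring_emb.
by rewrite exprS; apply: adjoin_ringM.
Qed.

Lemma adjoin_ring_sum (T : Type) (s : seq T) (F : T -> L) :
  (forall i, Rth (F i)) -> Rth (\sum_(i <- s) F i).
Proof.
by move=> RF; apply: big_ind => //; [apply: adjoin_ring0 | apply: adjoin_ringD].
Qed.

Lemma integral_div_gen_expr u c : integralOver emb u -> u * th = c -> Rth c ->
  exists m s, Rth s /\ c ^+ m = th * s.
Proof.
move=> [h monic_h /rootP hu0] uth_c Rc; set m := (size h).-1.
have size_h : size h = m.+1 by rewrite prednK // size_poly_gt0 monic_neq0.
have h_m : h`_m = 1 by move/monicP: monic_h; rewrite /lead_coef size_h.
(* multiplying h(u) = 0 by th^m clears the denominators of u = c / th *)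
have sum0 : \sum_(i < m.+1) emb h`_i * (th ^+ (m - i) * c ^+ i) = 0.
  transitivity (th ^+ m * (map_poly emb h).[u]); last by rewrite hu0 mulr0.
  rewrite (horner_coef_wide (n := m.+1)); last first.
    by rewrite size_map_poly_id0 ?size_h // (monicP monic_h) rmorph1 oner_neq0.
  rewrite mulr_sumr; apply: eq_bigr => i _; rewrite coef_map -uth_c exprMn.
  have -> : th ^+ m = th ^+ (m - i) * th ^+ i by rewrite -exprD subnK // -ltnS.
  ring.
exists m, (- \sum_(i < m) emb h`_i * (th ^+ (m.-1 - i) * c ^+ i)); split.
  apply/adjoin_ringN/adjoin_ring_sum => i; apply: adjoin_ringM; first exact: adjoin_ring_emb.
  by apply: adjoin_ringM; apply: adjoin_ringX => //; apply: adjoin_ring_gen.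
move: sum0; rewrite big_ord_recr /= subnn expr0 mul1r h_m rmorph1 mul1r addrC.
move/eqP; rewrite addr_eq0 => /eqP ->; rewrite mulrN mulr_sumr; congr (- _).
apply: eq_bigr => i _.
have -> : (m - i = (m.-1 - i).+1)%N by have := ltn_ord i; lia.
by rewrite exprS; ring.
Qed.

Hypothesis int_th : integralOver emb th.

Lemma integral_adjoin_ring x : Rth x -> integralOver emb x.
Proof.
move=> [p ->]; apply: integral_horner int_th; apply/integral_poly => i.
by rewrite coef_map; apply: integral_id.
Qed.

Lemma integral_over_adjoin_ring x : integral_over Rth x -> integralOver emb x.
Proof.
move=> [q [monic_q Rq qx]]; apply: integral_root_monic monic_q qx _.
by apply/integral_poly => i; apply: integral_adjoin_ring.
Qed.

End AdjoinRing.

Lemma poly_split_coef (A : nzRingType) (p : {poly A}) j :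
  p = take_poly j p + p`_j *: 'X^j + drop_poly j.+1 p * 'X^(j.+1).
Proof.
apply/polyP => k; rewrite !coefD coef_take_poly coefZ coefXn coefMXn coef_drop_poly.
case: (ltngtP k j) => [kj | jk | ->]; rewrite ?mulr0 ?mulr1 ?addr0 ?add0r.
- by rewrite ltnS ltnW ?addr0.
- by rewrite ltnS leqNgt jk /= subnK.
- by rewrite ltnSn addr0.
Qed.

Lemma poly_dvd_coefs (A : comNzRingType) (a : A) (p : {poly A}) :
  (forall i, exists r, p`_i = a * r) -> exists q, p = a *: q.
Proof.
elim/poly_ind: p => [|p c IH] dvd_p; first by exists 0; rewrite scaler0.
have [|q ->] := IH.
  by move=> i; have [r] := dvd_p i.+1; rewrite -cons_poly_def coef_cons /=; exists r.
have [r] := dvd_p 0%N; rewrite -cons_poly_def coef_cons /= => ->.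
by exists (q * 'X + r%:P); rewrite scalerDr scalerAl polyCM mul_polyC.
Qed.

Section PureRootExtension.
Variables (R : idomainType) (L : fieldExtType {fraction R}) (n : nat) (a : R) (th : L).
Local Notation K := {fraction R}.
Local Notation emb := (@frac_emb R L).
Local Notation iK := (in_alg L).
Local Notation Rth := (adjoin_ring th).
Local Notation Kth := <<1%VS; th>>%VS.
Local Notation f := ('X^n - a%:P : {poly R}).
Local Notation fK := (map_poly (@tofrac R) f).

Hypothesis R_int_closed : integrally_closed_domain R.
Hypothesis f_irr : irreducible_over f.
Hypothesis f_th : root (map_poly emb f) th.
Hypothesis n_gt0 : (0 < n)%N.

Lemma map_poly_emb (p : {poly R}) : map_poly emb p = map_poly iK (map_poly (@tofrac R) p).
Proof. by apply/polyP => i; rewrite !coef_map. Qed.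

Lemma size_map_tofrac (p : {poly R}) : size (map_poly (@tofrac R) p) = size p.
Proof. exact: size_map_inj_poly (@tofrac_inj R) (rmorph0 _) p. Qed.

Lemma size_map_iK (p : {poly K}) : size (map_poly iK p) = size p.
Proof. exact: size_map_inj_poly (fmorph_inj iK) (rmorph0 _) p. Qed.

Lemma monic_f : f \is monic.
Proof. exact: monicXnsubC. Qed.

Lemma size_f : size f = n.+1.
Proof.
by rewrite size_polyDl ?size_polyXn // size_polyN size_polyC ltnS (leq_trans (leq_b1 _)).
Qed.

Lemma minPoly_gen : minPoly 1%AS th = map_poly iK fK.
Proof.
have /polyOver1P[mu mu_eq] := minPolyOver 1%AS th.
have monic_mu : mu \is monic by rewrite -(map_monic iK) -mu_eq monic_minPoly.
have mu_dvd : mu %| fK.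
  rewrite -(dvdp_map iK) -mu_eq; apply: minPoly_dvdp; first by apply/polyOver1P; exists fK.
  by rewrite -map_poly_emb.
have fK_eq : fK = (fK %/ mu) * mu by rewrite divpK.
have monic_nu : fK %/ mu \is monic.
  by rewrite -(monicMr _ monic_mu) -fK_eq monic_map ?monic_f.
have [muR muR_eq] := monic_factor_lift R_int_closed monic_f (etrans fK_eq (mulrC _ _)) monic_mu.
have [nuR nuR_eq] := monic_factor_lift R_int_closed monic_f fK_eq monic_nu.
have f_eq : f = nuR * muR.
  by apply: (map_inj_poly (@tofrac_inj R) (rmorph0 _)); rewrite rmorphM /= -muR_eq -nuR_eq.
have [_ _ /(_ _ _ f_eq)[] /[!poly_unitE] /andP[/eqP size1 _]] := f_irr.
  have nu1 : fK %/ mu = 1 by rewrite (monic_size_le1 monic_nu) // nuR_eq size_map_tofrac size1.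
  by rewrite mu_eq fK_eq nu1 mul1r.
by have := size_minPoly 1%AS th; rewrite mu_eq muR_eq size_map_iK size_map_tofrac size1.
Qed.

Lemma adjoin_degree_gen : adjoin_degree 1%AS th = n.
Proof.
by have := size_minPoly 1%AS th; rewrite minPoly_gen size_map_iK size_map_tofrac size_f => -[].
Qed.

Lemma adjoin_coords x : x \in Kth ->
  exists2 c : {poly K}, (size c <= n)%N & x = (map_poly iK c).[th].
Proof.
move=> Kth_x; have /polyOver1P[c c_eq] := Fadjoin_polyOver 1%AS th x.
exists c; last by rewrite -c_eq Fadjoin_poly_eq.
by rewrite -size_map_iK -c_eq -adjoin_degree_gen size_Fadjoin_poly.
Qed.

Lemma horner_gen_inj (c1 c2 : {poly K}) : (size c1 <= n)%N -> (size c2 <= n)%N ->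
  (map_poly iK c1).[th] = (map_poly iK c2).[th] -> c1 = c2.
Proof.
move=> size_c1 size_c2 c12_eq; apply/eqP; rewrite -subr_eq0; apply: contraTT isT => c12_neq0.
have size_c12 : (size (c1 - c2)%R <= n)%N.
  by rewrite (leq_trans (size_polyD _ _)) // size_polyN geq_max size_c1.
have : fK %| c1 - c2.
  rewrite -(dvdp_map iK) -minPoly_gen; apply: minPoly_dvdp.
    by apply/polyOver1P; exists (c1 - c2).
  by rewrite /root rmorphB hornerD hornerN c12_eq subrr.
by move/(dvdp_leq c12_neq0); rewrite size_map_tofrac size_f ltnNge size_c12.
Qed.

Lemma gen_expr_n : th ^+ n = emb a.
Proof.
move/rootP: f_th; rewrite rmorphB /= map_polyXn map_polyC hornerD hornerN hornerXn hornerC.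
by move/eqP; rewrite subr_eq0 => /eqP.
Qed.

Lemma integral_gen : integralOver emb th.
Proof. by exists f; first exact: monic_f. Qed.

Lemma adjoin_ring_reduce x : Rth x ->
  exists2 g : {poly R}, (size g <= n)%N & x = (map_poly emb g).[th].
Proof.
move=> [p ->]; exists (rmodp p f).
  by rewrite -ltnS -size_f ltn_rmodpN0 ?monic_neq0 ?monic_f.
rewrite {1}(rdivp_eq monic_f p) rmorphD rmorphM hornerD hornerM.
by rewrite (rootP f_th) mulr0 add0r.
Qed.

Lemma euler_pure z : z \in Kth -> integralOver emb z -> Rth (emb (n%:R * a) * z).
Proof.
move=> Kth_z [h monic_h hz0]; have [c _ z_eq] := adjoin_coords Kth_z.
have [|w w_eq] := euler_rmodp_lift R_int_closed monic_f monic_h (p := c).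
  rewrite -(dvdp_map iK) -minPoly_gen; apply: minPoly_dvdp.
    by apply/polyOver1P; exists (map_poly (@tofrac R) h \Po c); rewrite map_comp_poly -map_poly_emb.
  by rewrite /root map_comp_poly horner_comp -z_eq -map_poly_emb.
have fK_th : (map_poly iK fK).[th] = 0 by rewrite -map_poly_emb; apply/rootP.
(* w(th) = z f'(th) = n z th^(n-1), so th w(th) = n a z *)
have w_th : (map_poly emb w).[th] = z * (th ^+ n.-1 *+ n).
  have := congr1 (fun p => (map_poly iK p).[th])
    (rdivp_eq (monic_map (@tofrac R) monic_f) (c * fK^`())).
  set F := map_poly _ f in fK_th w_eq *.
  rewrite /= !rmorphD !rmorphM /= !hornerD !hornerM fK_th mulr0 add0r w_eq -map_poly_emb => <-.
  rewrite -z_eq /F -deriv_map -map_poly_emb.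
  by rewrite rmorphB /= map_polyXn map_polyC derivB derivXn derivC subr0 hornerMn hornerXn.
have -> : emb (n%:R * a) * z = th * (map_poly emb w).[th].
  have -> : emb (n%:R * a) = n%:R * th ^+ n by rewrite gen_expr_n rmorphM rmorph_nat.
  have -> : th ^+ n = th * th ^+ n.-1 by rewrite -exprS prednK.
  by rewrite w_th -mulr_natr; ring.
by apply: adjoin_ringM; [apply: adjoin_ring_gen | exists w].
Qed.

Hypothesis R_noeth : noetherian R.
Hypothesis R_max : nonzero_primes_maximal R.
Hypothesis sqf_a : square_free a.
Hypothesis n_a_primes : forall P, is_prime_ideal P -> P n%:R -> P a.

Let a_neq0 : a != 0 := square_free_neq0 sqf_a.
Let emb_a_neq0 : emb a != 0.
Proof. by rewrite frac_emb_eq0. Qed.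

Lemma prime_of_integral_div_gen P r u : is_prime_ideal P -> P a ->
  integralOver emb u -> u * th = emb r -> P r.
Proof.
move=> primeP Pa int_u u_eq.
have [m [s [Rs rm_eq]]] := integral_div_gen_expr int_u u_eq (adjoin_ring_emb th r).
have [g size_g sn_eq] := adjoin_ring_reduce (adjoin_ringX n Rs).
have g_eq : (r ^+ (m * n))%:F%:P = a%:F *: map_poly (@tofrac R) g.
  apply: horner_gen_inj; first exact: leq_trans (size_polyC_leq1 _) n_gt0.
    by rewrite (leq_trans (size_scale_leq _ _)) ?size_map_tofrac.
  rewrite map_polyC hornerC map_polyZ hornerZ -map_poly_emb -sn_eq.
  change (emb (r ^+ (m * n)) = emb a * s ^+ n).
  by rewrite -gen_expr_n -exprMn -rm_eq -exprM rmorphXn.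
have := congr1 (fun p : {poly K} => p`_0) g_eq; rewrite coefC coefZ coef_map /= -tofracM.
move=> /tofrac_inj rmn_eq; apply: (prime_idealX (k := (m * n)%N) primeP).
by rewrite rmn_eq; case: primeP => idP _ _; apply: idealMr.
Qed.

Definition conductor z r := Rth (emb r * z).

Definition missing_integral z := [/\ z \in Kth, integralOver emb z & ~ Rth z].

Lemma conductor_ideal z : is_ideal (conductor z).
Proof.
split; rewrite /conductor.
- by rewrite rmorph0 mul0r; apply: adjoin_ring0.
- by move=> x y Rx Ry; rewrite rmorphD mulrDl; apply: adjoin_ringD.
- by move=> r x Rx; rewrite rmorphM -mulrA; apply: adjoin_ringM => //; apply: adjoin_ring_emb.
Qed.

Lemma conductor_prime z : missing_integral z ->
    (forall z', missing_integral z' -> (forall r, conductor z r -> conductor z' r) ->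
       forall r, conductor z' r -> conductor z r) ->
  is_prime_ideal (conductor z).
Proof.
move=> [Kz int_z notRz] z_max; split; first exact: conductor_ideal.
  by rewrite /conductor rmorph1 mul1r.
move=> x y; have [Py|notPy] := classic (conductor z y); [by right | left].
apply: (z_max (emb y * z)) => [|r|]; rewrite /conductor.
- split => //; last by apply: integral_mul => //; apply: integral_id.
  have -> : emb y * z = y%:F *: z by rewrite mulr_algl.
  exact: memvZ.
- by rewrite mulrCA; apply: adjoin_ringM => //; apply: adjoin_ring_emb.
- by rewrite mulrA -rmorphM.
Qed.

Lemma conductor_coefs z c p : z = (map_poly iK c).[th] -> (size c <= n)%N ->
  conductor z p -> exists g, p%:F *: c = map_poly (@tofrac R) g.
Proof.
move=> z_eq size_c /adjoin_ring_reduce[g size_g g_eq]; exists g.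
apply: horner_gen_inj; first exact: leq_trans (size_scale_leq _ _) size_c.
  by rewrite size_map_tofrac.
by rewrite map_polyZ hornerZ -z_eq -map_poly_emb -g_eq.
Qed.

Lemma prime_coef_step P t (b : {poly R}) z j : is_prime_ideal P -> P a -> ~ P t ->
    (forall p, P p -> principal_ideal a (t * p)) -> integralOver emb z ->
    emb a * z = (map_poly emb b).[th] -> (j < n)%N ->
  (forall k, (k < j)%N -> P b`_k) -> P b`_j.
Proof.
move=> primeP Pa notPt t_unif int_z az_eq lt_jn Pb_lt.
have [E tT_eq] : exists E, t *: take_poly j b = a *: E.
  apply: poly_dvd_coefs => k; rewrite coefZ coef_take_poly.
  by case: ifP => [/Pb_lt/t_unif // | _]; exists 0; rewrite !mulr0.
set T := (map_poly emb (take_poly j b)).[th].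
set D := (map_poly emb (drop_poly j.+1 b)).[th].
have aE : emb a * (map_poly emb E).[th] = emb t * T.
  by rewrite -hornerZ -map_polyZ -tT_eq map_polyZ hornerZ.
have az_split : emb a * z = T + emb b`_j * th ^+ j + D * th ^+ j.+1.
  by rewrite az_eq {1}(poly_split_coef b j) !rmorphD rmorphM /= map_polyZ !map_polyXn !hornerE.
have th_n : th ^+ (n.-1 - j) * th ^+ j.+1 = emb a.
  by rewrite -exprD -gen_expr_n; congr (_ ^+ _); lia.
(* u = t b_j / th; it is integral because t b_k is in aR for k < j, which lets us remove
   the low-degree part of t z *)
pose u := th ^+ (n.-1 - j) * (emb t * z - (map_poly emb E).[th]) - emb t * D.
have int_u : integralOver emb u.
  have int_Rth := integral_adjoin_ring integral_gen.
  apply: integral_sub; first apply: integral_mul; first exact/integral_expr/integral_gen.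
    apply: integral_sub; first by apply: integral_mul => //; apply: integral_id.
    by apply: int_Rth; exists E.
  by apply: integral_mul; [apply: integral_id | apply: int_Rth; exists (drop_poly j.+1 b)].
have u_th : u * th = emb (t * b`_j).
  apply: (mulfI emb_a_neq0); transitivity (th ^+ (n.-1 - j) * th *
    (emb t * (emb a * z) - emb a * (map_poly emb E).[th]) - emb a * emb t * D * th).
    by rewrite /u; ring.
  by rewrite az_split aE rmorphM -th_n exprS; ring.
have [_ _ Pmul] := primeP.
by case: (Pmul _ _ (prime_of_integral_div_gen primeP Pa int_u u_th)).
Qed.

Lemma uniformizer_in_conductor z c t : integralOver emb z -> z = (map_poly iK c).[th] ->
    (size c <= n)%N -> is_prime_ideal (conductor z) -> conductor z a ->
  (forall p, conductor z p -> principal_ideal a (t * p)) -> conductor z t.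
Proof.
move=> int_z z_eq size_c primeP Pa t_unif; apply: NNPP => notPt.
have [b b_eq] := conductor_coefs z_eq size_c Pa.
have az_eq : emb a * z = (map_poly emb b).[th].
  by rewrite z_eq map_poly_emb -b_eq map_polyZ hornerZ.
have Pb j : conductor z b`_j.
  elim/ltn_ind: j => j IH; have [lt_jn | le_nj] := ltnP j n.
    exact: prime_coef_step primeP Pa notPt t_unif int_z az_eq lt_jn IH.
  have size_b : (size b <= n)%N.
    by rewrite -size_map_tofrac -b_eq (leq_trans (size_scale_leq _ _)).
  by rewrite nth_default ?(leq_trans size_b) //; case: primeP => [[]].
have [e e_eq] : exists e, t *: b = a *: e.
  by apply: poly_dvd_coefs => k; rewrite coefZ; apply: t_unif.
apply: notPt; exists e; apply: (mulfI emb_a_neq0).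
by rewrite mulrCA az_eq -!hornerZ -!map_polyZ e_eq.
Qed.

Lemma adjoin_ring_integrally_closed z : z \in Kth -> integralOver emb z -> Rth z.
Proof.
move=> Kz int_z; apply: NNPP => notRz.
have [z0 [Kz0 int_z0 notRz0] z0_max] := noetherian_maximal R_noeth
  (fun z _ => conductor_ideal z) (ex_intro missing_integral z (And3 Kz int_z notRz)).
set P := conductor z0.
have primeP : is_prime_ideal P by apply: conductor_prime.
have Pa : P a.
  have [_ _ Pmul] := primeP.
  by have [/(n_a_primes primeP) | ] := Pmul _ _ (euler_pure Kz0 int_z0).
have [c size_c z0_eq] := adjoin_coords Kz0.
have [i ci_notin_R] : exists i, ~ exists r, c`_i = r%:F.
  apply: NNPP => all_in; apply: notRz0; have [|cR c_eq] := @poly_tofrac_lift _ c.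
    by move=> i; apply: NNPP => ?; apply: all_in; exists i.
  by exists cR; rewrite z0_eq c_eq map_poly_emb.
have inv_ci : ideal_inv P c`_i.
  move=> p /(conductor_coefs z0_eq size_c)[g g_eq]; exists g`_i.
  by rewrite mulrC -coefZ g_eq coef_map.
have [t [notPt t_unif]] := exists_uniformizer sqf_a primeP Pa
  (mul_inv_prime_ideal R_int_closed R_noeth R_max primeP Pa a_neq0 inv_ci ci_notin_R).
exact: notPt (uniformizer_in_conductor int_z0 z0_eq size_c primeP Pa t_unif).
Qed.

End PureRootExtension.

Theorem theorem1p3 (R : idomainType) (L : fieldExtType {fraction R})
  (n : nat) (a : R) (alpha : L) :
  dedekind R ->
  square_free a ->
  irreducible_over ('X^n - a%:P) ->
  root (map_poly (@frac_emb R L) ('X^n - a%:P)) alpha ->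
  (forall P, is_prime_ideal P -> P (n%:R) -> P a) ->
  forall x : L, x \in <<1%VS; alpha>>%VS ->
    integral_over (adjoin_ring alpha) x -> adjoin_ring alpha x.
Proof.
move=> [R_noeth R_int_closed R_max] sqf_a f_irr f_alpha n_a_primes x Kx int_x.
have n_gt0 : (0 < n)%N.
  rewrite lt0n; apply: contraTneq f_alpha => n0; have [f_neq0 _ _] := f_irr.
  by move: f_neq0; rewrite n0 expr0 -polyCB polyC_eq0 map_polyC /root hornerC frac_emb_eq0.
apply: (adjoin_ring_integrally_closed R_int_closed f_irr f_alpha n_gt0 R_noeth R_max sqf_a
  n_a_primes Kx).
exact: (integral_over_adjoin_ring (integral_gen f_alpha n_gt0) int_x).
Qed.
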